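(* Let $n\ge1$, $q\ge2$ be integers, $b\in\{1,\dots,q-1\}$, $c=\lceil q/b\rceil$ and $d=cb-q$. Let $a\in\{0,\dots,q-1\}$ be unknown and let $\mathbf k\in\mathbb Z_q^n$ be an unknown key having at least one entry that is a unit modulo $q$. Given one query to the quantum oracle $U_{\mathsf{LRF}}:|\mathbf x\rangle|z\rangle\mapsto|\mathbf x\rangle|z+\mathsf{LRF}_{\mathbf k,a,b}(\mathbf x)\bmod c\rangle$ ($\mathbf x\in\mathbb Z_q^n$, $z\in\mathbb Z_c$), the following algorithm outputs $\mathbf k$ with probability at least $4/\pi^2-O(d/q)$: (1) prepare $\frac{1}{\sqrt{q^n}}\sum_{\mathbf x\in\mathbb Z_q^n}|\mathbf x\rangle\otimes\frac{1}{\sqrt c}\sum_{z=0}^{c-1}\omega_c^z|z\rangle$ with $\omega_c=e^{2\pi i/c}$; (2) apply $U_{\mathsf{LRF}}$ once; (3) discard the last register and apply $\mathsf{QFT}_{\mathbb Z_q}^{\otimes n}$; (4) measure in the computational basis and output the outcome.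
   Context: For $a\in\mathbb Z_q$, $b\in\mathbb Z_q\setminus\{0\}$, $c=\lceil q/b\rceil$, partition $\mathbb Z_q$ into blocks $I_v(a,b)=\{a+vb,\dots,a+vb+b-1\}$ (mod $q$) for $v\in\{0,\dots,c-2\}$ and $I_{c-1}(a,b)=\{a+(c-1)b,\dots,a+q-1\}$ (mod $q$). The linear rounding function with key $\mathbf k\in\mathbb Z_q^n$ is $\mathsf{LRF}_{\mathbf k,a,b}:\mathbb Z_q^n\to\mathbb Z_c$, $\mathsf{LRF}_{\mathbf k,a,b}(\mathbf x)=v$ iff $\langle\mathbf x,\mathbf k\rangle\in I_v(a,b)$, where $\langle\cdot,\cdot\rangle$ is the inner product modulo $q$. The quantum Fourier transform over $\mathbb Z_q$ is $\mathsf{QFT}_{\mathbb Z_q}|x\rangle=\frac{1}{\sqrt q}\sum_{y\in\mathbb Z_q}e^{2\pi i xy/q}|y\rangle$. *)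

From mathcomp Require Import all_boot all_order all_algebra complex.
From mathcomp Require Import all_classical all_reals all_analysis.
Set Implicit Arguments. Unset Strict Implicit. Unset Printing Implicit Defensive.
Import Order.TTheory GRing.Theory Num.Theory.
Local Open Scope ring_scope.
Local Open Scope complex_scope.

Definition vecZq (n q : nat) := {ffun 'I_n -> 'I_q}.

Definition ipq (n q : nat) (x k : vecZq n q) : nat :=
  ((\sum_(i < n) x i * k i) %% q)%N.

Definition ceil_div (q b : nat) : nat := ((q + b - 1) %/ b)%N.

Definition block_len (q b v : nat) : nat :=
  if (v < (ceil_div q b).-1)%N then b else (q - (ceil_div q b).-1 * b)%N.

Definition in_block (q a b v t : nat) : bool :=
  [exists j : 'I_q, (j < block_len q b v)%N && (t == (a + v * b + j) %% q)%N].

Definition LRF (n q : nat) (k : vecZq n q) (a b : nat) (x : vecZq n q) : nat :=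
  match [pick v : 'I_(ceil_div q b) | in_block q a b v (ipq x k)] with
  | Some v => val v
  | None => 0%N
  end.

Definition expi {R : realType} (theta : R) : R[i] := cos theta +i* sin theta.

Definition omega {R : realType} (m t : nat) : R[i] :=
  expi (2 * pi * t%:R / m%:R).


Definition cconj {R : realType} (z : R[i]) : R[i] := complex.Re z -i* complex.Im z.

(* Joint state of the two registers |x>|z>, x in Z_q^n, z in Z_c *)
Definition state (R : realType) (n q c : nat) := vecZq n q -> 'I_c -> R[i].

Definition psi0 {R : realType} (n q c : nat) : state R n q c :=
  fun x z => ((Num.sqrt ((q ^ n)%N%:R : R))^-1 * (Num.sqrt (c%:R : R))^-1)%:C
             * omega c z.

(* The oracle U : |x>|z> |-> |x>|z + f(x) mod c>, extended linearly *)
Definition apply_oracle {R : realType} (n q c : nat) (f : vecZq n q -> nat)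
  (psi : state R n q c) : state R n q c :=
  fun x w => \sum_(z : 'I_c | ((z + f x) %% c)%N == val w) psi x z.

(* Discarding the last register: reduced density matrix on the first *)
Definition reduced_dm {R : realType} (n q c : nat) (psi : state R n q c) :
  vecZq n q -> vecZq n q -> R[i] :=
  fun x x' => \sum_(z : 'I_c) psi x z * cconj (psi x' z).

(* matrix entry <y| QFT_{Z_q}^{(x) n} |x> = prod_i (1/sqrt q) e^{2 pi i x_i y_i/q} *)
Definition QFTn {R : realType} (n q : nat) (y x : vecZq n q) : R[i] :=
  \prod_(i < n) (((Num.sqrt (q%:R : R))^-1)%:C * omega q (x i * y i)%N).

(* Probability of outcome y when measuring QFT rho QFT^dagger in the
   computational basis: <y| Q rho Q^dagger |y> *)
Definition outcome_prob {R : realType} (n q : nat)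
  (rho : vecZq n q -> vecZq n q -> R[i]) (y : vecZq n q) : R :=
  complex.Re (\sum_(x : vecZq n q) \sum_(x' : vecZq n q)
        QFTn y x * rho x x' * cconj (QFTn y x')).

Definition success_prob (R : realType) (n q : nat) (k : vecZq n q) (a b : nat) : R :=
  let c := ceil_div q b in
  outcome_prob
    (reduced_dm (apply_oracle (LRF k a b) (@psi0 R n q c))) k.

(* The oracle acts on the omega_c-eigenvector of the second register, so it only
   multiplies |x> by the phase omega_c^(-LRF(x)) (phase kickback) and discarding
   that register costs nothing.  The amplitude of the outcome k is then, up to
   normalisation, sum_x omega_q^<x,k> omega_c^(-LRF(x)).  Since some k_i is a unit,
   <x,k> is equidistributed on Z_q, and writing <x,k> = a + s the success
   probability becomes |T|^2 / q^2 with T = sum_(s<q) omega_q^s omega_c^(-(s/b)).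
   Extending s up to cb = q + d turns T into c G, G = sum_(j<b) omega_q^j, at cost
   O(d): the phases omega_q^(vb) omega_c^(-v) drift by at most 2 pi d / q.
   Finally |G| |omega_q - 1| = |omega_q^b - 1|, which is close to
   |e^(2 pi i/c) - 1| = 2 sin(pi/c) >= 4/c (Jordan), while |omega_q - 1| <= 2 pi/q;
   hence c |G| >= 2q/pi - d and |T|/q >= 2/pi - O(d/q). *)

From mathcomp Require Import all_boot all_order all_algebra complex.
From mathcomp Require Import all_classical all_reals all_analysis.
From mathcomp Require Import lra zify ring.
Import Order.TTheory GRing.Theory Num.Theory Normc.
Import numFieldNormedType.Exports.
Local Open Scope ring_scope.
Local Open Scope complex_scope.

Section TrigonometricBounds.
Context {R : realType}.
Implicit Types x y : R.

Lemma is_derive_ge0_le (f df : R -> R) :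
  (forall t, is_derive t (1 : R) f (df t)) -> (forall t, 0 <= t -> 0 <= df t) ->
  forall x, 0 <= x -> f 0 <= f x.
Proof.
move=> f_df df_ge0 x x_ge0.
have f_cont : continuous f.
  by move=> t; apply/differentiable_continuous/derivable1_diffP; exact: ex_derive.
have [t /[!in_itv] /andP[t_ge0 _] mvt] :=
  MVT_segment x_ge0 (fun t _ => f_df t) (continuous_subspaceT f_cont).
by rewrite -subr_ge0 mvt subr0 mulr_ge0 ?df_ge0.
Qed.

Lemma sin_le x : 0 <= x -> sin x <= x.
Proof.
move=> x_ge0; suff : 0 - sin 0 <= x - sin x by rewrite sin0 subr0 subr_ge0.
apply: (@is_derive_ge0_le (fun t => t - sin t) (fun t => 1 - cos t)) => [t _|//].
by rewrite subr_ge0 cos_le1.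
Qed.

Lemma sqr_sin_le x : sin x ^+ 2 <= x ^+ 2.
Proof.
wlog x_ge0 : x / 0 <= x.
  move=> le_sin; have [/le_sin //|x_lt0] := leP 0 x.
  by rewrite -sqrrN -sinN -(sqrrN x) le_sin // oppr_ge0 ltW.
have [x_le1|x_gt1] := leP x 1.
  have sin_ge0 : 0 <= sin x.
    by apply: sin_ge0_pi; rewrite x_ge0 /=; have := pi_ge2 R; lra.
  by rewrite lerXn2r ?nnegrE ?sin_le.
have sin2_le1 : sin x ^+ 2 <= 1 by rewrite -(cos2Dsin2 x) lerDr sqr_ge0.
nra.
Qed.

Lemma cos_half x : cos x = 1 - 2 * sin (x / 2) ^+ 2.
Proof.
rewrite [in LHS](splitr x) -mulr2n cos_mulr2n cos2sin2 -mulr_natr; ring.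
Qed.

Lemma cos_ge x : 1 - x ^+ 2 / 2 <= cos x.
Proof.
have := sqr_sin_le (x / 2); rewrite cos_half expr_div_n; lra.
Qed.

Lemma sin_ge x : 0 <= x -> x - x ^+ 3 / 6 <= sin x.
Proof.
move=> x_ge0.
suff : sin 0 - 0 + 0 ^+ 3 / 6 <= sin x - x + x ^+ 3 / 6.
  by rewrite sin0 expr0n /= mul0r !addr0; lra.
apply: (@is_derive_ge0_le (fun t => sin t - t + t ^+ 3 / 6)
  (fun t => cos t - 1 + t ^+ 2 / 2)) => // t.
  by apply: is_derive_eq; rewrite /GRing.scale /= !mulr1; field.
by have := cos_ge t; lra.
Qed.

Lemma pi_sqr_ge8 : 8 <= pi ^+ 2 :> R.
Proof. by have := cos_ge (pi / 2); rewrite cos_pihalf expr_div_n; lra. Qed.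

(* Jordan's inequality at pi/c, from the cubic Taylor bound and 2 sqrt 2 <= pi < 4. *)
Lemma sin_pi_div_ge (c : nat) : (2 <= c)%N -> 2 / c%:R <= sin (pi / c%:R) :> R.
Proof.
move=> c_ge2; have [->|c_neq2] := eqVneq c 2%N; first by rewrite sin_pihalf divff.
have c_ge3 : (3 : R) <= c%:R by rewrite (ler_nat _ 3); lia.
have c_gt0 : (0 : R) < c%:R by apply: lt_le_trans c_ge3.
have pi_ge : 14 / 5 <= pi :> R by have := pi_sqr_ge8; have := pi_ge2 R; nra.
have pi_lt4 : pi < 4 :> R by have := pihalf_lt2 R; lra.
set y := pi / c%:R.
have c_pi : c%:R * y = pi by rewrite mulrC divfK // gt_eqF.
have y_ge0 : 0 <= y by rewrite divr_ge0 ?pi_ge0.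
have y_le : y <= pi / 3.
  by rewrite ler_wpM2l ?pi_ge0 // lef_pV2 ?posrE.
apply: (le_trans _ (sin_ge _ y_ge0)).
rewrite -(ler_pM2l c_gt0) mulrCA divff ?mulr1 ?gt_eqF //.
have -> : c%:R * (y - y ^+ 3 / 6) = pi - pi * y ^+ 2 / 6 by rewrite -c_pi; ring.
have : y ^+ 2 <= (pi / 3) ^+ 2 by rewrite lerXn2r ?nnegrE // divr_ge0 ?pi_ge0.
rewrite expr_div_n; nra.
Qed.

End TrigonometricBounds.

Section ComplexExponential.
Context {R : realType}.
Implicit Types (s t u : R) (z w : R[i]).

Lemma normc_ge0 z : 0 <= normc z.
Proof. by case: z => a b; exact: sqrtr_ge0. Qed.

Lemma normc_lerB z w : normc z - normc w <= normc (z - w).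
Proof. exact: (@lerB_dist _ (Rcomplex R)). Qed.

Lemma normc_sum_le (I : Type) (r : seq I) (P : pred I) (F : I -> R[i]) :
  normc (\sum_(i <- r | P i) F i) <= \sum_(i <- r | P i) normc (F i).
Proof. exact: (@ler_norm_sum _ (Rcomplex R)). Qed.

Lemma normc_real t : normc t%:C = `|t|.
Proof. by rewrite /= expr0n /= addr0 sqrtr_sqr. Qed.

Lemma mulc_conjc z : z * conjc z = (normc z ^+ 2)%:C.
Proof.
case: z => a b; rewrite /= sqr_sqrtr ?addr_ge0 ?sqr_ge0 //.
by apply/eqP; rewrite eq_complex /=; apply/andP; split; apply/eqP; ring.
Qed.

Lemma cconjE z : cconj z = conjc z.
Proof. by case: z. Qed.

Lemma expiD s t : expi s * expi t = expi (s + t).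
Proof.
rewrite /expi /= cosD sinD.
by apply/eqP; rewrite eq_complex /=; apply/andP; split; apply/eqP; ring.
Qed.

Lemma expi0 : expi 0 = 1 :> R[i].
Proof. by rewrite /expi cos0 sin0. Qed.

Lemma conjc_expi t : conjc (expi t) = expi (- t).
Proof. by rewrite /expi cosN sinN. Qed.

Lemma normc_expi t : normc (expi t) = 1.
Proof. by rewrite /= cos2Dsin2 sqrtr1. Qed.

Lemma expi_sum (I : Type) (r : seq I) (P : pred I) (F : I -> R) :
  \prod_(i <- r | P i) expi (F i) = expi (\sum_(i <- r | P i) F i).
Proof. by apply: esym; apply: (big_morph expi) => [s t|]; rewrite (expiD, expi0). Qed.

Lemma expi_periodic t (m : nat) : expi (t + 2 * pi * m%:R) = expi t.
Proof.
have -> : 2 * pi * m%:R = (pi *+ 2) *+ m :> R.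
  by rewrite -[_ *+ m]mulr_natr -[pi *+ 2]mulr_natr; ring.
by rewrite /expi (periodicn (@cosD2pi R)) (periodicn (@sinD2pi R)).
Qed.

Lemma sqr_normc_expi_sub1 t : normc (expi t - 1) ^+ 2 = 2 - 2 * cos t.
Proof.
rewrite /= sqr_sqrtr ?addr_ge0 ?sqr_ge0 // oppr0 addr0.
transitivity (cos t ^+ 2 + sin t ^+ 2 + 1 - 2 * cos t); first by ring.
by rewrite cos2Dsin2; ring.
Qed.

Lemma normc_expiB_le s t : normc (expi s - expi t) <= `|s - t|.
Proof.
have -> : expi s - expi t = expi t * (expi (s - t) - 1).
  by rewrite mulrBr mulr1 expiD [t + _]addrC subrK.
rewrite normcM normc_expi mul1r -ler_sqr ?nnegrE ?normc_ge0 //.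
by rewrite sqr_normc_expi_sub1 -normrX ger0_norm ?sqr_ge0 //; have := cos_ge (s - t); lra.
Qed.

Lemma normc_expi_sub1_ge (c : nat) :
  (2 <= c)%N -> 4 / c%:R <= normc (expi (2 * pi / c%:R : R) - 1).
Proof.
move=> c_ge2; have c_gt0 : (0 : R) < c%:R by rewrite ltr0n; lia.
have sin_ge := @sin_pi_div_ge R c c_ge2.
have two_div_ge0 : 0 <= 2 / c%:R :> R by rewrite divr_ge0 ?ltW.
rewrite -ler_sqr ?nnegrE ?normc_ge0 ?divr_ge0 ?ler0n //.
rewrite sqr_normc_expi_sub1 cos_half (_ : 2 * pi / c%:R / 2 = pi / c%:R); last first.
  by rewrite mulrAC [2 * pi]mulrC mulfK.
rewrite (_ : 4 / c%:R = 2 * (2 / c%:R)); first nra.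
by ring.
Qed.

End ComplexExponential.

Section RootsOfUnity.
Context {R : realType}.

Lemma omega_mod (m t : nat) : (0 < m)%N -> omega m (t %% m) = omega m t :> R[i].
Proof.
move=> m_gt0; have m_neq0 : (m%:R : R) != 0 by rewrite pnatr_eq0 -lt0n.
rewrite /omega {2}(divn_eq t m) natrD natrM -(expi_periodic _ (t %/ m)).
by congr expi; field.
Qed.

Lemma omegaD (m s t : nat) : omega m (s + t) = omega m s * omega m t :> R[i].
Proof. by rewrite /omega expiD natrD mulrDr mulrDl. Qed.

Lemma omega0 (m : nat) : omega m 0 = 1 :> R[i].
Proof. by rewrite /omega mulr0 mul0r expi0. Qed.

Lemma normc_omega (m t : nat) : normc (omega m t : R[i]) = 1.
Proof. exact: normc_expi. Qed.

Lemma omega_geometric (q b : nat) :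
  (omega q 1 - 1) * \sum_(0 <= j < b) omega q j = omega q b - 1 :> R[i].
Proof.
rewrite mulrBl mul1r mulr_sumr -sumrB.
under eq_bigr do rewrite -omegaD add1n.
by rewrite telescope_sumr // omega0.
Qed.

End RootsOfUnity.

Section ModularSums.
Context {V : zmodType}.

Lemma sum_nat_modDl (q m : nat) (F : nat -> V) : (0 < q)%N ->
  \sum_(0 <= s < q) F ((m + s) %% q)%N = \sum_(0 <= t < q) F t.
Proof.
move=> q_gt0; elim: m => [|m IHm].
  by apply: eq_big_nat => s /andP[_ s_lt_q]; rewrite add0n modn_small.
rewrite -IHm; set G := fun s => F ((m + s) %% q)%N.
under eq_bigr do rewrite addSnnS.
apply: (@addrI _ (G 0%N)); rewrite -big_nat_recl //.
by rewrite big_nat_recr //= addrC /G addn0 modnDr.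
Qed.

Lemma sum_nat_modMl (c b : nat) (F : nat -> V) :
  \sum_(0 <= s < c * b) F (s %% b)%N = (\sum_(0 <= j < b) F j) *+ c.
Proof.
elim: c => [|c IHc]; first by rewrite mul0n big_geq.
rewrite mulSnr (@big_cat_nat _ _ _ (c * b)) //= ?leq_addr // IHc.
rewrite -{1}(add0n (c * b)%N) big_addn addKn mulrSr.
congr (_ + _); apply: eq_big_nat => j /andP[_ j_lt_b].
by rewrite addnC modnMDl modn_small.
Qed.

End ModularSums.

Definition block_index (q a b t : nat) : nat :=
  if [pick v : 'I_(ceil_div q b) | in_block q a b v t] is Some v then val v else 0%N.

Lemma LRFE (n q : nat) (k : vecZq n q) (a b : nat) (x : vecZq n q) :
  LRF k a b x = block_index q a b (ipq x k).
Proof. by []. Qed.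

Section Blocks.
Variables (q b : nat).
Hypothesis b_gt0 : (0 < b)%N.
Local Notation c := (ceil_div q b).

Lemma ceil_div_mul_ge : (q <= c * b)%N.
Proof.
have := @ltn_ceil (q + b - 1) b b_gt0; rewrite mulSn -/(ceil_div q b).
move: (c * b)%N => cb; lia.
Qed.

Lemma ceil_div_pred_mul_lt : (0 < q)%N -> (c.-1 * b < q)%N.
Proof.
move=> q_gt0; have := @leq_divM (q + b - 1) b; rewrite -/(ceil_div q b).
case: c => [|c'] //=; rewrite mulSn; move: (c' * b)%N => cb; lia.
Qed.

Lemma divn_lt_ceil_div {s : nat} : (s < q)%N -> (s %/ b < c)%N.
Proof. by move=> s_lt_q; rewrite ltn_divLR // (leq_trans s_lt_q) // ceil_div_mul_ge. Qed.

Lemma block_lenP (v j : nat) : (v < c)%N ->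
  (j < block_len q b v)%N = (j < b)%N && (v * b + j < q)%N.
Proof.
move=> v_lt_c; rewrite /block_len; have q_le := ceil_div_mul_ge.
case: ifP => [v_lt|v_ge].
  have q_gt0 : (0 < q)%N.
    by rewrite lt0n; apply: contraTneq v_lt_c => ->; rewrite /ceil_div divn_small //; lia.
  have := ceil_div_pred_mul_lt q_gt0; have := leq_mul v_lt (leqnn b).
  rewrite mulSn; move: (v * b)%N (c.-1 * b)%N => vb cb; lia.
have -> : v = c.-1 by lia.
move: q_le v_lt_c; case: (c) => [|c'] //= q_le _.
by move: q_le; rewrite mulSn; move: (c' * b)%N => cb; lia.
Qed.

Lemma in_block_shift (a s v : nat) : (s < q)%N -> (v < c)%N ->
  in_block q a b v ((a + s) %% q)%N = (v == s %/ b)%N.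
Proof.
move=> s_lt_q v_lt_c; rewrite /in_block; apply/existsP/eqP => [[j]|->].
  rewrite block_lenP // -addnA => /andP[/andP[j_lt_b vbj_lt_q]].
  rewrite eqn_modDl !modn_small // => /eqP ->.
  by rewrite divnMDl // divn_small // addn0.
have s_mod_lt : (s %% b < q)%N by apply: leq_ltn_trans (leq_mod _ _) s_lt_q.
exists (Ordinal s_mod_lt).
rewrite block_lenP ?divn_lt_ceil_div //= ltn_mod b_gt0 -divn_eq s_lt_q.
by rewrite -addnA -divn_eq eqxx.
Qed.

Lemma block_index_shift (a s : nat) : (s < q)%N ->
  block_index q a b ((a + s) %% q)%N = (s %/ b)%N.
Proof.
move=> s_lt_q; rewrite /block_index.
case: pickP => [v|/(_ (Ordinal (divn_lt_ceil_div s_lt_q)))].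
  by rewrite in_block_shift // => /eqP.
by rewrite in_block_shift // eqxx.
Qed.

End Blocks.

Lemma coprime_modinv {m q : nat} : coprime m q -> exists u, (m * u = 1 %[mod q])%N.
Proof.
have [->|m_gt0] := posnP m.
  by rewrite /coprime gcd0n => /eqP ->; exists 0%N; rewrite !modn1.
case/(coprimeP _ m_gt0) => -[u v] /= uv; exists u.
by rewrite mulnC (_ : (u * m = v * q + 1)%N) ?modnMDl //; lia.
Qed.

Section EquidistributedInnerProduct.
Context {n q : nat} {k : vecZq n q} {i0 : 'I_n}.
Hypotheses (q_gt0 : (0 < q)%N) (k_unit : coprime (k i0) q).

Definition shift_at (m : nat) (x : vecZq n q) : vecZq n q :=
  [ffun i => if i == i0 then Ordinal (ltn_pmod (x i + m) q_gt0) else x i].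

Lemma shift_at_inj (m : nat) : injective (shift_at m).
Proof.
move=> x y /ffunP xy; apply/ffunP => i; have := xy i; rewrite !ffunE.
case: eqP => [-> /(congr1 val) /= /eqP|_ //].
by rewrite eqn_modDr !modn_small // => /eqP /val_inj.
Qed.

Lemma ipq_shift_at (m : nat) (x : vecZq n q) :
  ipq (shift_at m x) k = ((ipq x k + m * k i0) %% q)%N.
Proof.
rewrite /ipq modnDml (bigD1 i0) //= [in RHS](bigD1 i0) //= ffunE eqxx /=.
rewrite (eq_bigr (fun i => x i * k i)%N) => [|i /negbTE i_neq]; last by rewrite ffunE i_neq.
by rewrite -modnDml modnMml modnDml; congr (_ %% q)%N; ring.
Qed.

(* Shifting the i0-th coordinate by s / k_i0 shifts <x,k> by s; averaging over s
   divides by q, whence the characteristic-0 codomain. *)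
Lemma sum_ipq_coprime (V : numDomainType) (F : nat -> V) :
  \sum_(x : vecZq n q) F (ipq x k) = (\sum_(0 <= t < q) F t) *+ q ^ n.-1.
Proof.
have [u ku] := coprime_modinv k_unit.
have shift_inv (s : nat) :
    \sum_(x : vecZq n q) F (ipq x k) = \sum_(x : vecZq n q) F ((ipq x k + s) %% q)%N.
  rewrite (reindex_inj (shift_at_inj (s * u))); apply: eq_bigr => x _.
  by rewrite ipq_shift_at -mulnA [(u * _)%N]mulnC -modnDmr -modnMmr ku modnMmr muln1 modnDmr.
have n_gt0 : (0 < n)%N by apply: leq_ltn_trans (ltn_ord i0).
apply/eqP; rewrite -(eqr_pMn2r q_gt0) -mulrnA -expnSr prednK //; apply/eqP.
transitivity (\sum_(0 <= s < q) \sum_(x : vecZq n q) F ((ipq x k + s) %% q)%N).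
  by symmetry; under eq_bigr => s _ do rewrite -(shift_inv s); rewrite sumr_const_nat subn0.
rewrite exchange_big /=; under eq_bigr do rewrite sum_nat_modDl //.
by rewrite sumr_const card_ffun !card_ord.
Qed.

End EquidistributedInnerProduct.

Lemma eq_modnD_sub (c f z w : nat) : (z < c)%N -> (w < c)%N ->
  (((z + f) %% c) == w)%N = (z == (w + (c - f %% c)) %% c)%N.
Proof.
move=> z_lt_c w_lt_c; have c_gt0 : (0 < c)%N by apply: leq_ltn_trans z_lt_c.
have f_mod_lt := ltn_pmod f c_gt0.
have cancel_f (y : nat) : (y + f + (c - f %% c) = (f %/ c).+1 * c + y)%N.
  rewrite {1}(divn_eq f c) mulSn; move: (f %/ c * c)%N (f %% c)%N f_mod_lt => X Y; lia.
apply/eqP/eqP => [<-|->].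
  by rewrite modnDml cancel_f modnMDl modn_small.
by rewrite modnDml -addnA [(c - _ + _)%N]addnC addnA cancel_f modnMDl modn_small.
Qed.

Section QuantumCircuit.
Context {R : realType}.
Context {n q c : nat}.

Lemma outcome_prob_reduced_dm (psi : state R n q c) (y : vecZq n q) :
  outcome_prob (reduced_dm psi) y =
  \sum_(z : 'I_c) normc (\sum_(x : vecZq n q) QFTn y x * psi x z) ^+ 2.
Proof.
pose amp z := \sum_(x : vecZq n q) QFTn y x * psi x z.
transitivity (complex.Re (\sum_(z : 'I_c) amp z * conjc (amp z))); last first.
  by under eq_bigr do rewrite mulc_conjc; rewrite -rmorph_sum.
congr complex.Re; rewrite /reduced_dm.
under eq_bigr do under eq_bigr do rewrite mulr_sumr mulr_suml.
under eq_bigr do rewrite exchange_big.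
rewrite exchange_big; apply: eq_bigr => z _.
rewrite rmorph_sum mulr_suml; apply: eq_bigr => x _.
rewrite mulr_sumr; apply: eq_bigr => x' _.
by rewrite !cconjE rmorphM; ring.
Qed.

Lemma QFTnE (y x : vecZq n q) : (0 < q)%N ->
  QFTn y x = (((Num.sqrt (q%:R : R))^-1) ^+ n)%:C * omega q (ipq x y).
Proof.
move=> q_gt0; rewrite /QFTn big_split /= prodr_const card_ord rmorphXn.
congr (_ * _); rewrite /ipq omega_mod // /omega expi_sum natr_sum.
by rewrite mulr_sumr mulr_suml.
Qed.

Lemma apply_oracle_phase (f : vecZq n q -> nat) (N : R[i]) (psi : state R n q c)
    (x : vecZq n q) (w : 'I_c) :
  (forall x z, psi x z = N * omega c z) ->
  apply_oracle f psi x w = N * omega c w * conjc (omega c (f x)).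
Proof.
move=> psiE; have c_gt0 : (0 < c)%N by apply: leq_ltn_trans (ltn_ord w).
pose z0 := Ordinal (ltn_pmod (w + (c - f x %% c)) c_gt0).
rewrite /apply_oracle (big_pred1 z0) => [|z]; last by rewrite eq_modnD_sub ?ltn_ord.
have /eqP <- : ((z0 + f x) %% c == w)%N by rewrite eq_modnD_sub ?ltn_ord.
by rewrite psiE omega_mod // omegaD -!mulrA mulc_conjc normc_omega expr1n mulr1.
Qed.

End QuantumCircuit.

Definition phase_sum {R : realType} (q b c : nat) : R[i] :=
  \sum_(0 <= s < q) omega q s * conjc (omega c (s %/ b)%N).

Section PhaseSumEstimate.
Context {R : realType}.
Variables (q b c : nat).
Hypotheses (q_gt0 : (0 < q)%N) (b_gt0 : (0 < b)%N) (c_ge2 : (2 <= c)%N).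
Hypothesis q_le_cb : (q <= c * b)%N.
Local Notation d := (c * b - q)%N.
Local Notation G := (\sum_(0 <= j < b) omega q j : R[i]).

Let qR_gt0 : (0 : R) < q%:R. Proof. by rewrite ltr0n. Qed.
Let cR_gt0 : (0 : R) < c%:R. Proof. by rewrite ltr0n; apply: leq_trans c_ge2. Qed.
Let dE : d%:R = c%:R * b%:R - q%:R :> R. Proof. by rewrite natrB // natrM. Qed.

Lemma geometric_sum_ge : 2 * q%:R / pi - d%:R <= c%:R * normc G.
Proof.
have pi_gt0 := pi_gt0 R.
have omega1_le : normc (omega q 1 - 1 : R[i]) <= 2 * pi / q%:R.
  have := normc_expiB_le (2 * pi / q%:R : R) 0.
  by rewrite expi0 subr0 ger0_norm ?divr_ge0 ?mulr_ge0 ?pi_ge0 // /omega mulr1.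
have omegab_ge : 4 / c%:R - 2 * pi * d%:R / (q%:R * c%:R) <= normc (omega q b - 1 : R[i]).
  have := normc_lerB (expi (2 * pi / c%:R : R) - 1) (expi (2 * pi / c%:R) - omega q b).
  have := normc_expiB_le (2 * pi / c%:R : R) (2 * pi * b%:R / q%:R).
  have := @normc_expi_sub1_ge R c c_ge2.
  rewrite (_ : 2 * pi / c%:R - 2 * pi * b%:R / q%:R = - (2 * pi * d%:R / (q%:R * c%:R))); last first.
    by rewrite dE; field; rewrite !gt_eqF.
  rewrite normrN ger0_norm ?divr_ge0 ?mulr_ge0 ?pi_ge0 ?ler0n //.
  have cancel_expi (z w : R[i]) : z - 1 - (z - w) = w - 1 by ring.
  by rewrite cancel_expi /omega; lra.
rewrite -omega_geometric normcM in omegab_ge.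
have key : 4 / c%:R - 2 * pi * d%:R / (q%:R * c%:R) <= 2 * pi / q%:R * normc G.
  by apply: le_trans omegab_ge _; rewrite ler_wpM2r ?normc_ge0.
(* Abstract pi: [field] would otherwise unfold it. *)
move: pi_gt0 key; move: (pi : R) => p p_gt0 key.
have k_gt0 : 0 < 2 * p / (q%:R * c%:R) by apply: divr_gt0; apply: mulr_gt0.
rewrite -(ler_pM2l k_gt0).
have -> : 2 * p / (q%:R * c%:R) * (2 * q%:R / p - d%:R) =
          4 / c%:R - 2 * p * d%:R / (q%:R * c%:R) by field; rewrite !gt_eqF.
have -> : 2 * p / (q%:R * c%:R) * (c%:R * normc G) = 2 * p / q%:R * normc G.
  by field; rewrite !gt_eqF.
exact: key.
Qed.

Lemma phase_term_block (s : nat) :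
  omega q s * conjc (omega c (s %/ b)%N) =
  omega q (s %% b)%N * expi (2 * pi * d%:R * (s %/ b)%N%:R / (q%:R * c%:R)) :> R[i].
Proof.
rewrite {1}(divn_eq s b) omegaD mulrAC mulrC; congr (_ * _).
rewrite /omega conjc_expi expiD natrM; congr expi.
by rewrite dE; field; rewrite !gt_eqF.
Qed.

Lemma normc_phase_sum_sub_le : normc (phase_sum q b c - G *+ c) <= (2 * pi + 1) * d%:R.
Proof.
pose phi (s : nat) : R := 2 * pi * d%:R * (s %/ b)%N%:R / (q%:R * c%:R).
have phi_le (s : nat) : (s < q)%N -> `|phi s| <= 2 * pi * d%:R / q%:R.
  move=> s_lt_q; have v_lt_c : (s %/ b < c)%N.
    by rewrite ltn_divLR // (leq_trans s_lt_q).
  have bound_ge0 : 0 <= 2 * pi * d%:R / q%:R :> R.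
    by rewrite divr_ge0 ?mulr_ge0 ?pi_ge0.
  have -> : phi s = 2 * pi * d%:R / q%:R * ((s %/ b)%N%:R / c%:R).
    by rewrite /phi; field; rewrite !gt_eqF.
  have v_le : (s %/ b)%N%:R / c%:R <= 1 :> R.
    by rewrite ler_pdivrMr // mul1r ler_nat ltnW.
  rewrite ger0_norm; first exact: ler_piMr.
  by apply: mulr_ge0 => //; apply: divr_ge0.
have -> : phase_sum q b c - G *+ c =
    \sum_(0 <= s < q) omega q (s %% b)%N * (expi (phi s) - 1)
    - \sum_(q <= s < c * b) omega q (s %% b)%N.
  rewrite -sum_nat_modMl (big_cat_nat (leq0n q) q_le_cb) opprD addrA -sumrB.
  by congr (_ - _); apply: eq_bigr => s _; rewrite phase_term_block mulrBr mulr1.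
apply: le_trans; first exact: le_normcD.
rewrite normcN mulrDl mul1r.
apply: lerD; (apply: le_trans; first exact: normc_sum_le).
  apply: (@le_trans _ _ (\sum_(0 <= s < q) 2 * pi * d%:R / q%:R)).
    apply: ler_sum_nat => s /andP[_ s_lt_q]; rewrite normcM normc_omega mul1r.
    by rewrite -[X in expi _ - X]expi0 (le_trans (normc_expiB_le _ _)) // subr0 phi_le.
  by rewrite sumr_const_nat subn0 -[_ *+ q]mulr_natr divfK ?gt_eqF.
by under eq_bigr do rewrite normc_omega; rewrite sumr_const_nat.
Qed.

Lemma normc_phase_sum_ge :
  2 * q%:R / pi - (2 + 2 * pi) * d%:R <= normc (phase_sum q b c : R[i]).
Proof.
have := normc_phase_sum_sub_le; have := geometric_sum_ge.
have := le_normcD (phase_sum q b c) (G *+ c - phase_sum q b c).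
have -> : normc (G *+ c - phase_sum q b c) = normc (phase_sum q b c - G *+ c).
  by rewrite -normcN opprB.
by rewrite addrC subrK (normcMn G c) -mulr_natl; lra.
Qed.

End PhaseSumEstimate.

Section SuccessProbability.
Context {R : realType}.

Lemma sum_block_phase (q a b : nat) : (0 < q)%N -> (0 < b)%N ->
  \sum_(0 <= t < q) omega q t * conjc (omega (ceil_div q b) (block_index q a b t))
  = omega q a * phase_sum q b (ceil_div q b) :> R[i].
Proof.
move=> q_gt0 b_gt0; rewrite -(sum_nat_modDl _ a _ q_gt0) /phase_sum mulr_sumr.
apply: eq_big_nat => s /andP[_ s_lt_q].
by rewrite block_index_shift // omega_mod // omegaD mulrA.
Qed.

Lemma normalization_sqr (Q C : R) (n : nat) : (0 < n)%N -> 0 < Q -> 0 < C ->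
  ((Num.sqrt Q)^-1 ^+ n * ((Num.sqrt (Q ^+ n))^-1 * (Num.sqrt C)^-1) * Q ^+ n.-1) ^+ 2 * C
  = Q ^-2.
Proof.
case: n => // m _ Q_gt0 C_gt0 /=.
rewrite !exprMn -exprAC !exprVn !sqr_sqrtr ?exprn_ge0 ?ltW //.
have Qm_neq0 : Q ^+ m != 0 by rewrite expf_neq0 // gt_eqF.
rewrite -exprVn exprS !exprVn; move: Qm_neq0; set Y := Q ^+ m => Qm_neq0.
by field; rewrite Qm_neq0 !gt_eqF.
Qed.

Lemma success_probE {n q b a : nat} {k : vecZq n q} {i0 : 'I_n} :
  (0 < q)%N -> (0 < b)%N -> coprime (k i0) q ->
  success_prob R k a b = normc (phase_sum q b (ceil_div q b) : R[i]) ^+ 2 / q%:R ^+ 2.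
Proof.
move=> q_gt0 b_gt0 k_unit; set c := ceil_div q b.
have c_gt0 : (0 < c)%N.
  by have := @ceil_div_mul_ge q b b_gt0; rewrite -/c; case: (c) => //; lia.
have n_gt0 : (0 < n)%N by apply: leq_ltn_trans (ltn_ord i0).
pose K : R := (Num.sqrt q%:R)^-1 ^+ n.
pose N : R := (Num.sqrt (q ^ n)%N%:R)^-1 * (Num.sqrt c%:R)^-1.
have amp (z : 'I_c) :
    \sum_(x : vecZq n q) QFTn k x * apply_oracle (LRF k a b) (@psi0 R n q c) x z =
    (K * N * (q ^ n.-1)%N%:R)%:C * omega c z * (omega q a * phase_sum q b c).
  pose F t : R[i] := omega q t * conjc (omega c (block_index q a b t)).
  transitivity (\sum_(x : vecZq n q) ((K * N)%:C * omega c z) * F (ipq x k)).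
    apply: eq_bigr => x _; rewrite QFTnE // (apply_oracle_phase _ _ _ _ _ (fun _ _ => erefl)).
    by rewrite LRFE /F !rmorphM /=; ring.
  rewrite -mulr_sumr (sum_ipq_coprime q_gt0 k_unit) sum_block_phase //.
  by rewrite -mulr_natr !rmorphM rmorph_nat /=; ring.
rewrite /success_prob /= -/c outcome_prob_reduced_dm.
under eq_bigr do rewrite amp !normcM normc_real !normc_omega mulr1 mul1r.
have KN_ge0 : 0 <= K * N * (q ^ n.-1)%N%:R by rewrite !mulr_ge0 ?exprn_ge0 ?invr_ge0.
rewrite sumr_const card_ord ger0_norm // -[_ *+ c]mulr_natr exprMn mulrAC mulrC.
by rewrite /K /N !natrX normalization_sqr ?ltr0n.
Qed.

End SuccessProbability.

Lemma sqr_ge_sub {R : realFieldType} (x y e : R) :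
  0 <= x -> 0 <= y -> 0 <= e -> y - e <= x -> y ^+ 2 - 2 * y * e <= x ^+ 2.
Proof. by move=> x_ge0 y_ge0 e_ge0 le_yx; have [e_le_y|] := leP e y; nra. Qed.

Lemma sqr_div_lower_bound {R : realFieldType} (p Q d X : R) :
  0 < p -> 0 < Q -> 0 <= d -> 0 <= X -> 2 * Q / p - (2 + 2 * p) * d <= X ->
  4 / p ^+ 2 - 4 / p * (2 + 2 * p) * (d / Q) <= X ^+ 2 / Q ^+ 2.
Proof.
move=> p_gt0 Q_gt0 d_ge0 X_ge0 le_X.
have -> : 4 / p ^+ 2 - 4 / p * (2 + 2 * p) * (d / Q) =
          (2 / p) ^+ 2 - 2 * (2 / p) * ((2 + 2 * p) * d / Q).
  by rewrite expr_div_n; field; rewrite !gt_eqF.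
rewrite -expr_div_n; apply: sqr_ge_sub.
- exact: divr_ge0 X_ge0 (ltW Q_gt0).
- exact: divr_ge0 _ (ltW p_gt0).
- by apply: divr_ge0 (ltW Q_gt0); apply: mulr_ge0 => //; lra.
rewrite -(ler_pM2r Q_gt0) mulrBl !divfK ?gt_eqF //.
by rewrite mulrAC.
Qed.

Theorem theorem9 (R : realType) :
  exists C : R,
  forall (n q b : nat) (a : 'I_q) (k : vecZq n q),
    (1 <= n)%N -> (2 <= q)%N -> (1 <= b)%N -> (b <= q - 1)%N ->
    (exists i : 'I_n, coprime (k i) q) ->
    let c := ceil_div q b in
    let d := (c * b - q)%N in
    4 / pi ^+ 2 - C * (d%:R / q%:R) <= success_prob R k a b.
Proof.
exists (4 / pi * (2 + 2 * pi)).
move=> n q b a k _ q_ge2 b_gt0 b_lt_q [i0 k_unit] /=.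
set c := ceil_div q b; set d := (c * b - q)%N.
have q_gt0 : (0 < q)%N by apply: leq_trans q_ge2.
have q_le_cb : (q <= c * b)%N := ceil_div_mul_ge q b b_gt0.
have c_ge2 : (2 <= c)%N.
  by rewrite ltnNge; apply/negP => c_le1; move: q_le_cb (leq_mul c_le1 (leqnn b)); lia.
rewrite (success_probE q_gt0 b_gt0 k_unit) sqr_div_lower_bound ?pi_gt0 ?ltr0n //.
  exact: normc_ge0.
exact: normc_phase_sum_ge.
Qed.
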